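(* Let $\mathbf{C}$ be a category enriched over $\mathbf{Top}$ and let $\mathfrak{G} = (G_A)_{A \in \mathrm{Ob}(\mathbf{C})}$ be a family of groups with $G_A \le \mathrm{Aut}_\mathbf{C}(A)$ for all $A$. Let $A, S \in \mathrm{Ob}(\mathbf{C})$ be such that $\hom(A,S)$ is locally compact second-countable Hausdorff and $\mathrm{Aut}_\mathbf{C}(A)$ is a finite discrete group, and let $q_{AS} : \hom(A,S) \to \binom{S}{A}_\mathfrak{G}$, $f \mapsto f/{\sim_\mathfrak{G}}$, be the quotient map. Then for every Borel set $W \subseteq \hom(A,S)$, the set $q_{AS}(W)$ is Borel in $\binom{S}{A}_\mathfrak{G}$.
   Context: A category is enriched over $\mathbf{Top}$ if each homset is a topological space and composition is continuous. $\mathrm{Aut}_\mathbf{C}(A)$ is the group of invertible morphisms $A \to A$ (with the topology inherited from $\hom(A,A)$). For $f, g \in \hom(A,S)$, $f \sim_\mathfrak{G} g$ iff $f = g \cdot \alpha$ for some $\alpha \in G_A$; $\binom{S}{A}_\mathfrak{G} = \hom(A,S)/{\sim_\mathfrak{G}}$ carries the quotient topology (the finest topology making $q_{AS}$ continuous). *)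

From HB Require Import structures.
From mathcomp Require Import all_boot all_algebra.
From mathcomp Require Import all_classical all_reals all_analysis.
Unset Printing Implicit Defensive.
Local Open Scope classical_set_scope.

Record TopCat := {
  ObC : Type;
  HomC : ObC -> ObC -> topologicalType;
  idm : forall A, HomC A A;
  comp : forall A B C, HomC B C -> HomC A B -> HomC A C;
  comp_assoc : forall A B C D (h : HomC C D) (g : HomC B C) (f : HomC A B),
      comp A C D h (comp A B C g f) = comp A B D (comp B C D h g) f;
  comp_idl : forall A B (f : HomC A B), comp A B B (idm B) f = f;
  comp_idr : forall A B (f : HomC A B), comp A A B f (idm A) = f;
  comp_cont : forall A B C,
      continuous (fun p : HomC B C * HomC A B => comp A B C p.1 p.2)
}.

Arguments comp {t A B C}.
Arguments idm {t} A.
Arguments HomC : clear implicits.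
Arguments ObC : clear implicits.

Section Defs.
Variable C : TopCat.

Definition AutC (A : ObC C) : set (HomC C A A) :=
  [set f | exists g : HomC C A A, comp g f = idm A /\ comp f g = idm A].

Definition subgroup_of_Aut (A : ObC C) (G : set (HomC C A A)) : Prop :=
  [/\ G `<=` AutC A, G (idm A),
      (forall f g, G f -> G g -> G (comp f g)) &
      (forall f g, G f -> comp g f = idm A -> comp f g = idm A -> G g)].

Definition finite_discrete_Aut (A : ObC C) : Prop :=
  finite_set (AutC A) /\
  forall a, AutC A a -> exists U : set (HomC C A A), open U /\ U `&` AutC A = [set a].

Variable GG : forall A : ObC C, set (HomC C A A).

Definition simG (A S : ObC C) (f g : HomC C A S) : Prop :=
  exists2 alpha, GG A alpha & f = comp g alpha.

Definition gclass (A S : ObC C) (f : HomC C A S) : set (HomC C A S) :=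
  [set g | simG A S g f].

Definition binomG (A S : ObC C) : Type :=
  {X : set (HomC C A S) | exists f, X = gclass A S f}.

Definition qAS (A S : ObC C) (f : HomC C A S) : binomG A S :=
  exist _ (gclass A S f) (ex_intro _ f erefl).

(* quotient topology: the finest topology making q_AS continuous *)
Definition quot_open (A S : ObC C) (U : set (binomG A S)) : Prop :=
  open (qAS A S @^-1` U).

Definition quot_borel (A S : ObC C) : set (set (binomG A S)) :=
  <<s quot_open A S >>.

End Defs.

Definition borel_top (T : topologicalType) : set (set T) := <<s open >>.

From Pilot Require Import Defs.
From HB Require Import structures.
From mathcomp Require Import all_boot all_algebra.
From mathcomp Require Import all_classical all_reals all_analysis.
Local Open Scope classical_set_scope.

(* The finite group G_A acts continuously on hom(A,S) by precomposition, and
   q_AS is the orbit map of this action. The saturation of a closed set is a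
   finite union of closed sets, so images of closed sets are Borel. Cover
   hom(A,S) by the countably many basic open sets e_n, each cut down to the
   points fixed by every alpha in G_A that brings some point of e_n back into
   e_n; q_AS is injective on such a piece (Hausdorffness makes every point lie
   in one), so on it images commute with complements, and the Borel sets whose
   restricted image is Borel form a sigma-algebra containing the open sets,
   open-and-closed sets being F_sigma in a regular second-countable space.
   Only the finiteness of Aut_C(A) is needed, and local compactness only
   through regularity. *)

Lemma g_sigma_setD (T : Type) (G : set (set T)) (A B : set T) :
  <<s G >> A -> <<s G >> B -> <<s G >> (A `\` B).
Proof.
have sigmaC Z : <<s G >> Z -> <<s G >> (~` Z).
  by move=> GZ; rewrite -setTD; exact: sigma_algebraCD.
move=> GA GB; rewrite -[A `\` B]setCK setCD -bigcup2E; apply: (sigmaC).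
by apply: sigma_algebra_bigcup => -[|[|n]] //=; [exact: sigmaC | exact: sigma_algebra0].
Qed.

Lemma g_sigma_image_inj (T U : Type) (f : T -> U) (P : set T)
    (D : set (set T)) (G : set (set U)) :
  set_inj P f -> <<s G >> (f @` P) ->
  (forall A, D A -> <<s G >> (f @` (A `&` P))) ->
  forall B, <<s D >> B -> <<s G >> (f @` (B `&` P)).
Proof.
move=> f_inj GP GD; apply: smallest_sub => //; split => /=.
- by rewrite set0I image_set0; exact: sigma_algebra0.
- move=> B GB; suff -> : f @` ((setT `\` B) `&` P) = f @` P `\` f @` (B `&` P).
    exact: g_sigma_setD.
  apply/seteqP; split => [_ [x [[_ Bx] Px] <-]|_ [[x Px <-] nBx]].
  + split; first by exists x.
    by move=> [y [By Py] /f_inj yx]; apply: Bx; rewrite -yx ?inE.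
  + by exists x => //; split => //; split => // Bx; apply: nBx; exists x.
- by move=> F GF; rewrite setI_bigcupl image_bigcup; exact: sigma_algebra_bigcup.
Qed.

Lemma second_countable_nat_basis {T : topologicalType} : @second_countable T ->
  exists2 e : nat -> set T, forall n, open (e n) &
    forall x N, nbhs x N -> exists2 n, e n x & e n `<=` N.
Proof.
case=> B /pcard_surjP[g g_surj] [B_open B_basis].
exists (fun n => if `[< B (g n) >] then g n else set0).
  by move=> n; case: asboolP => [/B_open|_] //; exact: open0.
move=> x N /B_basis[U [BU Ux] UN]; have [n _ gnU] := g_surj U BU.
by exists n; rewrite gnU; case: asboolP.
Qed.

Lemma locally_compact_hausdorff_regular {T : topologicalType} :
  locally_compact [set: T] -> hausdorff_space T -> regular_space T.
Proof.
move=> T_lc T_hs x; have [U xU [cU _]] := T_lc x I.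
by apply: compact_regular T_hs cU _; rewrite withinET in xU.
Qed.

Lemma open_bigcup_closed {T : topologicalType} {e : nat -> set T} {O : set T} :
  regular_space T -> (forall x N, nbhs x N -> exists2 n, e n x & e n `<=` N) ->
  open O ->
  exists2 F : nat -> set T, forall n, closed (F n) & O = \bigcup_n F n.
Proof.
move=> T_reg e_basis oO.
exists (fun n => if `[< closure (e n) `<=` O >] then closure (e n) else set0).
  by move=> n; case: asboolP => _; [exact: closed_closure | exact: closed0].
apply/seteqP; split => [x Ox|x [n _]]; last by case: asboolP => [clO /clO|_ []].
have [N xN clNO] := T_reg x O (open_nbhs_nbhs (conj oO Ox)).
have [n enx enN] := e_basis x N xN.
have clenO : closure (e n) `<=` O by apply: subset_trans clNO; exact: closureS.
by exists n => //; case: asboolP => // _; exact: subset_closure.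
Qed.

Lemma nbhs_moved_point {T : topologicalType} {f : T -> T} {x : T} :
  hausdorff_space T -> continuous f -> f x <> x ->
  exists2 N, nbhs x N & forall z, N z -> ~ N (f z).
Proof.
rewrite open_hausdorff => T_hs f_cont fx_x.
have /T_hs[[U V] /= [xU fxV] [oU oV /eqP UV0]] : x != f x by apply/eqP => /esym.
rewrite !inE in xU fxV.
exists (U `&` f @^-1` V) => [|z [_ fzV] [fzU _]].
  by apply: filterI; [exact: open_nbhs_nbhs | exact/f_cont/open_nbhs_nbhs].
by have : (U `&` V) (f z) by []; rewrite UV0.
Qed.

Lemma closed_fixed_points (T : topologicalType) (f : T -> T) :
  hausdorff_space T -> continuous f -> closed [set x | f x = x].
Proof.
move=> T_hs f_cont; rewrite -[X in closed X]setCK; apply: open_closedC.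
rewrite openE => x /= fx_x; have [N xN Nf] := nbhs_moved_point T_hs f_cont fx_x.
by apply: filterS xN => z Nz fz_z; apply: (Nf z Nz); rewrite fz_z.
Qed.

Section FiniteActionQuotient.
Variables (X : topologicalType) (Q : Type) (q : X -> Q).
Variables (K : choiceType) (G : set K) (act : K -> X -> X).
Hypothesis act_continuous : forall a, continuous (act a).
Hypothesis q_eqP : forall x y, q x = q y <-> exists2 a, G a & x = act a y.
Hypothesis G_finite : finite_set G.

Local Notation quotient_borel := <<s [set U : set Q | open (q @^-1` U)] >>.

Lemma preimage_image_orbit (Y : set X) :
  q @^-1` (q @` Y) = \bigcup_(a in G) act a @^-1` Y.
Proof.
apply/seteqP; split => [x [y Yy /q_eqP[a Ga yE]]|x [a Ga Yax]].
  by exists a => //=; rewrite -yE.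
by exists (act a x) => //; apply/q_eqP; exists a.
Qed.

Lemma quotient_borel_image_closed (Y : set X) : closed Y -> quotient_borel (q @` Y).
Proof.
move=> cY; rewrite -[q @` Y]setCK -setTD; apply: sigma_algebraCD.
apply: sub_sigma_algebra; rewrite /= -preimage_setC preimage_image_orbit.
apply: closed_openC; apply: closed_bigcup => // a _.
exact: (continuous_closedP _).1 (act_continuous a) _ cY.
Qed.

Hypothesis X_hausdorff : hausdorff_space X.

Lemma nbhs_displacing (x : X) : exists2 N, nbhs x N &
  forall a z, G a -> act a x <> x -> N z -> ~ N (act a z).
Proof.
pose D := [set a | G a /\ act a x <> x].
have /choice[N N_disp] : forall a, exists N,
    D a -> nbhs x N /\ forall z, N z -> ~ N (act a z).
  move=> a; have [[_ ax_x]|nDa] := pselect (D a); last by exists setT => /nDa.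
  by have [N ? ?] := nbhs_moved_point X_hausdorff (act_continuous a) ax_x; exists N.
have D_finite : finite_set D by apply: sub_finite_set G_finite => a [].
have [D' DE] := finite_fsetP.1 D_finite.
exists (\bigcap_(a in D) N a) => [|a z Ga ax_x NDz NDaz].
  by rewrite DE; apply: filter_bigI => a aD; apply: (N_disp a _).1; rewrite DE.
have Da : D a by [].
exact: (N_disp a Da).2 z (NDz a Da) (NDaz a Da).
Qed.

Variable e : nat -> set X.
Hypothesis e_open : forall n, open (e n).
Hypothesis e_basis : forall x N, nbhs x N -> exists2 n, e n x & e n `<=` N.
Hypothesis X_regular : regular_space X.

Lemma quotient_borel_image_open_closed (O F : set X) :
  open O -> closed F -> quotient_borel (q @` (O `&` F)).
Proof.
move=> oO cF; have [V cV ->] := open_bigcup_closed X_regular e_basis oO.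
rewrite setI_bigcupl image_bigcup; apply: sigma_algebra_bigcup => n.
by apply: quotient_borel_image_closed; exact: closedI.
Qed.

Definition transversal_piece n := e n `&`
  \bigcap_(a in [set a | G a /\ e n `&` act a @^-1` e n !=set0]) [set y | act a y = y].

Lemma transversal_piece_inj n : set_inj (transversal_piece n) q.
Proof.
move=> x y; rewrite !inE => -[enx _] [eny fix_y] /q_eqP[a Ga xE].
by rewrite xE; apply: fix_y; split => //; exists y; split => //=; rewrite -xE.
Qed.

Lemma bigcup_transversal_piece : \bigcup_n transversal_piece n = setT.
Proof.
apply/seteqP; split => // x _; have [N xN N_disp] := nbhs_displacing x.
have [n enx enN] := e_basis x N xN; exists n => //; split => // a [Ga [z [enz enaz]]].
by apply: contrapT => ax_x; exact: N_disp a z Ga ax_x (enN z enz) (enN _ enaz).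
Qed.

Lemma quotient_borel_image_transversal_piece n (B : set X) :
  borel_top X B -> quotient_borel (q @` (B `&` transversal_piece n)).
Proof.
have closed_fix : closed (\bigcap_(a in [set a | G a /\ e n `&` act a @^-1` e n !=set0])
    [set y | act a y = y]).
  by apply: closed_bigI => a _; exact: closed_fixed_points.
apply: g_sigma_image_inj; first exact: transversal_piece_inj.
  exact: quotient_borel_image_open_closed (e_open n) closed_fix.
by move=> O oO; rewrite setIA; apply: quotient_borel_image_open_closed => //; exact: openI.
Qed.

Theorem quotient_borel_image (W : set X) : borel_top X W -> quotient_borel (q @` W).
Proof.
move=> bW; rewrite -[W]setIT -bigcup_transversal_piece setI_bigcupr image_bigcup.
by apply: sigma_algebra_bigcup => n; exact: quotient_borel_image_transversal_piece.
Qed.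

End FiniteActionQuotient.

Arguments quotient_borel_image {X Q q K G act} _ _ _ _ {e}.

Lemma continuous_precomp {C : TopCat} {A B D : ObC C} (a : HomC C A B) :
  continuous (fun f : HomC C B D => Defs.comp f a).
Proof.
move=> f; apply: (@continuous_comp _ _ _ (fun g : HomC C B D => (g, a))
  (fun p : HomC C B D * HomC C A B => Defs.comp p.1 p.2)).
  by apply: cvg_pair; [exact: cvg_id | exact: cvg_cst].
exact: comp_cont.
Qed.

Lemma qAS_eqP {C : TopCat} {GG : forall A : ObC C, set (HomC C A A)} {A S : ObC C} :
  subgroup_of_Aut C A (GG A) -> forall f g : HomC C A S,
  qAS C GG A S f = qAS C GG A S g <-> exists2 a, GG A a & f = Defs.comp g a.
Proof.
case=> G_aut G_id G_comp G_inv f g; split.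
  move=> /(congr1 sval) /= fg.
  have : gclass C GG A S f f by exists (idm A); rewrite ?comp_idr.
  by rewrite fg.
case=> a Ga ->; apply: eq_exist; apply/seteqP; split => h [b Gb ->].
  by exists (Defs.comp a b); [exact: G_comp | rewrite comp_assoc].
have [a' [a'a aa']] := G_aut a Ga.
exists (Defs.comp a' b); first exact: G_comp (G_inv a a' Ga a'a aa') Gb.
by rewrite comp_assoc -[Defs.comp (Defs.comp g a) a']comp_assoc aa' comp_idr.
Qed.

Theorem lemma4p4 (C : TopCat) (GG : forall A : ObC C, set (HomC C A A))
  (HG : forall A : ObC C, subgroup_of_Aut C A (GG A))
  (A S : ObC C)
  (Hlc : @locally_compact (HomC C A S) [set: HomC C A S])
  (Hsc : @second_countable (HomC C A S))
  (Hhs : @hausdorff_space (HomC C A S))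
  (Haut : finite_discrete_Aut C A)
  (W : set (HomC C A S)) :
  borel_top (HomC C A S) W -> quot_borel C GG A S (qAS C GG A S @` W).
Proof.
move=> W_borel.
have GA_finite : finite_set (GG A) by apply: sub_finite_set Haut.1; case: (HG A).
have [e e_open e_basis] := second_countable_nat_basis Hsc.
have X_regular := locally_compact_hausdorff_regular Hlc Hhs.
exact: (quotient_borel_image (act := fun a f => Defs.comp f a)
  continuous_precomp (qAS_eqP (HG A)) GA_finite Hhs e_open e_basis X_regular W W_borel).
Qed.
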